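(* Let $\beta>1$ be an Ito-Sadahiro number, with $d_{-\beta}(l_\beta)=d_1\cdots d_m\,(d_{m+1}\cdots d_{m+p})^\omega$, where $m\ge0$, $p\ge1$ are minimal such that $d_{-\beta}(l_\beta)$ can be written in this form. Then $\beta$ is an algebraic integer of degree at most $m+p$.
   Context: For $\beta>1$ put $l_\beta=-\frac{\beta}{\beta+1}$, $r_\beta=\frac{1}{\beta+1}$ and $I_\beta=[l_\beta,r_\beta)$. Define $T:I_\beta\to I_\beta$ by $T(x)=-\beta x-\lfloor -\beta x-l_\beta\rfloor$. The $(-\beta)$-expansion of $x\in I_\beta$ is the infinite word $d_{-\beta}(x)=x_1x_2x_3\cdots$ with $x_i=\lfloor -\beta T^{i-1}(x)-l_\beta\rfloor$ for $i\ge1$; then $x=\sum_{i\ge1}x_i(-\beta)^{-i}$. The notation $w^\omega$ denotes infinite repetition of the finite word $w$. A number $\beta>1$ is an Ito-Sadahiro number if $d_{-\beta}(l_\beta)$ is eventually periodic. *)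

From HB Require Import structures.
From mathcomp Require Import all_boot all_order all_algebra.
From mathcomp Require Import reals.
Set Implicit Arguments. Unset Strict Implicit. Unset Printing Implicit Defensive.
Import Order.TTheory GRing.Theory Num.Theory.
Local Open Scope ring_scope.

Section NegBeta.
Variable R : realType.

Definition lbeta (beta : R) : R := - (beta / (beta + 1)).

Definition Tnb (beta : R) (x : R) : R :=
  - beta * x - (Num.floor (- beta * x - lbeta beta))%:~R.

(* 0-indexed digits: nbdigit beta x i = x_{i+1} = floor(-beta T^i(x) - l_beta) *)
Definition nbdigit (beta : R) (x : R) (i : nat) : int :=
  Num.floor (- beta * iter i (Tnb beta) x - lbeta beta).

Definition dl (beta : R) (i : nat) : int := nbdigit beta (lbeta beta) i.

(* the word d written as d_1..d_m (d_{m+1}..d_{m+p})^omega (p >= 1) *)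
Definition preper_form (d : nat -> int) (m p : nat) : Prop :=
  (0 < p)%N /\ forall n : nat, (m <= n)%N -> d (n + p)%N = d n.

Definition algebraic_integer (beta : R) : Prop :=
  exists P : {poly int}, P \is monic /\ (map_poly intr P).[beta] = 0.

Definition alg_degree_le (beta : R) (n : nat) : Prop :=
  exists Q : {poly rat}, Q != 0 /\ (size Q <= n.+1)%N /\ (map_poly ratr Q).[beta] = 0.

End NegBeta.

From HB Require Import structures.
From mathcomp Require Import all_boot all_order all_algebra.
From mathcomp Require Import reals.
From mathcomp Require Import ring lra.
Import Order.TTheory GRing.Theory Num.Theory.
Local Open Scope ring_scope.

(* Put x_n = T^n(l_beta).  Since -beta (l_beta + 1) = l_beta, induction gives
   x_n = l_beta + 1 - F_n(beta) for an integer polynomial F_n of degree n with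
   leading coefficient (-1)^n, read off the first n digits.  If the digits are
   periodic from rank m with period p, then x_(m+p+n) - x_(m+n) =
   (-beta)^n (x_(m+p) - x_m) stays below 1 in absolute value, which forces
   x_(m+p) = x_m; so beta is a root of (-1)^(m+p) (F_(m+p) - F_m), a monic
   integer polynomial of degree m + p. *)

Lemma bernoulli_ineq {R : realDomainType} (x : R) (n : nat) :
  -1 <= x -> 1 + x *+ n <= (1 + x) ^+ n.
Proof.
move=> hx; elim: n => [|n IH]; first by rewrite mulr0n addr0 expr0.
have hx1 : 0 <= 1 + x by lra.
have hxn : 0 <= x * x * n%:R by rewrite mulr_ge0 ?ler0n // -expr2 sqr_ge0.
rewrite exprSr mulrSr; apply: le_trans (ler_wpM2r hx1 IH).
rewrite -mulr_natr in IH *; nra.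
Qed.

Lemma exprn_unbounded {R : archiRealFieldType} (c b : R) :
  1 < b -> exists n, c < b ^+ n.
Proof.
move=> hb; have hb1 : 0 < b - 1 by rewrite subr_gt0.
have hk : 0 <= `|c| / (b - 1) by rewrite divr_ge0 // ltW.
set n := Num.bound (`|c| / (b - 1)); exists n.
have hbern : 1 + (b - 1) * n%:R <= b ^+ n.
  by rewrite mulr_natr -{2}(subrKC 1 b); apply: bernoulli_ineq; lra.
have := archi_boundP hk; rewrite ltr_pdivrMr // => hlt.
have := real_ler_norm (num_real c); lra.
Qed.

Lemma eq0_bounded_expr {R : archiRealFieldType} (b y : R) :
  1 < `|b| -> (forall n, `|b ^+ n * y| < 1) -> y = 0.
Proof.
move=> hb hbounded; apply/eqP; apply: contraT => hy.
have [n hn] := exprn_unbounded `|y|^-1 _ hb.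
have := hbounded n; rewrite normrM normrX.
by rewrite -ltr_pdivlMr ?normr_gt0 // div1r ltNge (ltW hn).
Qed.

Fixpoint digit_poly (d : nat -> int) (n : nat) : {poly int} :=
  if n is k.+1 then - digit_poly d k * 'X + (d k + 1)%:P else 1.

Lemma size_digit_poly d n : size (digit_poly d n) = n.+1.
Proof.
elim: n => [|n IH] /=; first by rewrite size_poly1.
have F_neq0 : digit_poly d n != 0 by rewrite -size_poly_eq0 IH.
rewrite size_polyDl mulNr size_polyN size_mulX ?IH //.
by apply: leq_ltn_trans (size_polyC_leq1 _) _.
Qed.

Lemma lead_coef_digit_poly d n : lead_coef (digit_poly d n) = (-1) ^+ n.
Proof.
elim: n => [|n IH] /=; first by rewrite lead_coef1.
rewrite lead_coefDl ?mulNr ?lead_coefN ?lead_coefMX ?IH ?exprS ?mulN1r //.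
rewrite size_polyN size_mulX -?size_poly_eq0 size_digit_poly //.
by apply: leq_ltn_trans (size_polyC_leq1 _) _.
Qed.

Definition period_poly (d : nat -> int) (m p : nat) : {poly int} :=
  (-1) ^+ (m + p) *: (digit_poly d (m + p) - digit_poly d m).

Section PeriodPoly.
Variables (d : nat -> int) (m p : nat).
Hypothesis p_gt0 : (0 < p)%N.

Let size_digit_poly_lt : (size (- digit_poly d m) < size (digit_poly d (m + p)))%N.
Proof. by rewrite size_polyN !size_digit_poly ltnS -addn1 leq_add2l. Qed.

Lemma size_period_poly : size (period_poly d m p) = (m + p).+1.
Proof. by rewrite size_scale ?signr_eq0 // size_polyDl // size_digit_poly. Qed.

Lemma period_poly_monic : period_poly d m p \is monic.
Proof.
by rewrite monicE lead_coefZ lead_coefDl // lead_coef_digit_poly -expr2 sqrr_sign.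
Qed.

End PeriodPoly.

Section NegativeBetaTransformation.
Context {R : realType}.
Implicit Types (beta x : R).

Lemma Tnb_itv beta x : lbeta beta <= Tnb beta x < lbeta beta + 1.
Proof.
rewrite /Tnb; set z := - beta * x - lbeta beta.
have := floor_itv z; rewrite intrD.
have -> : - beta * x = z + lbeta beta by rewrite /z; ring.
move=> /andP[h1 h2]; apply/andP; split; lra.
Qed.

Lemma iter_Tnb_itv {beta x} n : lbeta beta <= x < lbeta beta + 1 ->
  lbeta beta <= iter n (Tnb beta) x < lbeta beta + 1.
Proof. by case: n => [//|n] _; apply: Tnb_itv. Qed.

Lemma iter_TnbS beta x n :
  iter n.+1 (Tnb beta) x = - beta * iter n (Tnb beta) x - (nbdigit beta x n)%:~R.
Proof. by []. Qed.

Lemma iter_Tnb_periodic {beta x m p} : 1 < beta ->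
  lbeta beta <= x < lbeta beta + 1 ->
  (forall n, (m <= n)%N -> nbdigit beta x (n + p) = nbdigit beta x n) ->
  iter (m + p) (Tnb beta) x = iter m (Tnb beta) x.
Proof.
move=> hb hx hper; pose y n := iter n (Tnb beta) x.
have gap n : y (m + p + n)%N - y (m + n)%N = (- beta) ^+ n * (y (m + p)%N - y m).
  elim: n => [|n IH]; first by rewrite !addn0 mul1r.
  rewrite !addnS /y !iter_TnbS (addnAC m p n) hper ?leq_addr // exprS -mulrA -IH.
  by rewrite /y (addnAC m n p); ring.
apply/eqP; rewrite -subr_eq0; apply/eqP.
apply: (@eq0_bounded_expr _ (- beta)); first by rewrite normrN gtr0_norm // (lt_trans ltr01).
move=> n; rewrite -gap ltr_norml.
have := iter_Tnb_itv (m + p + n) hx; have := iter_Tnb_itv (m + n) hx.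
rewrite /y; lra.
Qed.

Lemma iter_Tnb_lbeta beta n : beta + 1 != 0 ->
  iter n (Tnb beta) (lbeta beta)
  = lbeta beta + 1 - (map_poly intr (digit_poly (dl beta) n)).[beta].
Proof.
move=> beta1_neq0; elim: n => [|n IH].
  by rewrite /= rmorph1 hornerC addrK.
rewrite iter_TnbS IH /= rmorphD rmorphM rmorphN /= map_polyX map_polyC /= !hornerE.
by rewrite /lbeta /dl intrD; field.
Qed.

Lemma period_poly_root {beta m p} : 1 < beta ->
  (forall n, (m <= n)%N -> dl beta (n + p) = dl beta n) ->
  (map_poly intr (period_poly (dl beta) m p)).[beta] = 0.
Proof.
move=> beta_gt1 hper; have beta1_neq0 : beta + 1 != 0 by rewrite gt_eqF //; lra.
have l_itv : lbeta beta <= lbeta beta < lbeta beta + 1 by rewrite lexx ltrDl ltr01.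
have := iter_Tnb_periodic beta_gt1 l_itv hper.
rewrite !iter_Tnb_lbeta // => /addrI/oppr_inj orbit_eq.
by rewrite /period_poly map_polyZ rmorphB /= hornerZ hornerD hornerN orbit_eq subrr mulr0.
Qed.

End NegativeBetaTransformation.

Theorem corollary1 (R : realType) (beta : R) (m p : nat) :
  1 < beta ->
  preper_form (dl beta) m p ->
  (forall m' p' : nat, preper_form (dl beta) m' p' -> (m <= m')%N /\ (p <= p')%N) ->
  algebraic_integer beta /\ alg_degree_le beta (m + p).
Proof.
move=> beta_gt1 [p_gt0 hper] _.
have beta_root := period_poly_root beta_gt1 hper.
have P_monic := period_poly_monic (dl beta) m p p_gt0.
split; first by exists (period_poly (dl beta) m p).
exists (map_poly intr (period_poly (dl beta) m p)); split.
  by apply/monic_neq0/monic_map.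
split; first by rewrite size_rat_int_poly (size_period_poly _ _ _ p_gt0).
by rewrite -map_poly_comp (eq_map_poly (@ratr_int _)).
Qed.
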